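(* Let $\varepsilon>0$ and let $G=(V,E)$ be a multigraph with $|V|=s\ge 2$ vertices and $|E|=m\ge s(1+\varepsilon)$ edges. Then there exists a set $S\subseteq V$ of $|S|\le 8\log(s)\cdot\lceil 1/\varepsilon\rceil$ vertices spanning at least $|S|+1$ edges.
   Context: A multigraph is a graph that may contain parallel edges and (possibly parallel) self-loops; edges are counted with multiplicity. A set of vertices $S$ spans an edge if all endpoints of the edge lie in $S$ (a self-loop at $v$ is spanned iff $v\in S$). Logarithms are base 2. *)

From mathcomp Require Import all_boot.
From Stdlib Require Import Reals.

(* A multigraph on vertex type T: a finite type E of edges (counted with
   multiplicity) with an endpoint map ends : E -> T * T; a self-loop at v is
   an edge with ends e = (v, v). *)

Definition spans {T E : finType} (ends : E -> T * T) (S : {set T}) (e : E) : bool :=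
  ((ends e).1 \in S) && ((ends e).2 \in S).

Definition n_spanned {T E : finType} (ends : E -> T * T) (S : {set T}) : nat :=
  #|[set e | spans ends S e]|.

Definition log2 (x : R) : R := (ln x / ln 2)%R.

(* ceiling: Int_part is the floor, so ceil x = - floor (- x) *)
Definition ceilR (x : R) : Z := (- Int_part (- x))%Z.

From mathcomp Require Import all_boot zify.
From Stdlib Require Import Reals Lra Psatz.

Set Implicit Arguments.
Unset Strict Implicit.
Unset Printing Implicit Defensive.
Local Open Scope nat_scope.
(* Importing Reals rebinds ^ in nat_scope; restore ssrnat's exponentiation. *)
Local Notation "m ^ n" := (expn m n) : nat_scope.

(* Let k = ceil(1/eps), so (k + 1) s <= k m, and let 2^p <= s < 2^(p+1).
   Suppose every set of at most 4(k(p+1) + 1) vertices is sparse.  Then no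
   nonempty W is k-expanding (every B in W touching at least (1+1/k)|B|
   edges of W): breadth-first balls around a vertex of W would grow by a
   factor (k+1)/k per step as long as they are sparse, exceeding 2^(p+1) > |W|
   within k(p+1) steps; so some ball of radius R <= k(p+1) is dense, and in
   its BFS tree the ancestors of the endpoints of two non-tree edges form a
   dense set of at most 4(R+1) vertices.  Peeling off non-expanding pieces,
   every nonempty W then spans fewer than (1+1/k)|W| edges, contradicting
   (k + 1) s <= k m for W = V. *)

Lemma bernoulli_nat k n : k ^ n.+1 + n * k ^ n <= k * (k + 1) ^ n.
Proof.
elim: n => [|n IH]; first by rewrite mul0n addn0 expn1 expn0 muln1.
rewrite [(k + 1) ^ n.+1]expnS mulnCA.
apply: leq_trans (leq_mul (leqnn (k + 1)) IH).
rewrite !expnS; move: (k ^ n) => a; nia.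
Qed.

(* Consequently (1 + 1/k)^(k j) >= 2^j, in integer form. *)
Lemma pow_doubling k j : 0 < k -> 2 ^ j * k ^ (k * j) <= (k + 1) ^ (k * j).
Proof.
move=> k_gt0; rewrite !expnM -expnMn; case: j => [|j]; first by rewrite !expn0.
rewrite leq_exp2r // -(leq_pmul2l k_gt0); apply: leq_trans (bernoulli_nat k k).
by rewrite expnS mul2n -addnn mulnDr.
Qed.

Section Multigraph.
Variables (T E : finType) (ends : E -> T * T).

Definition joins (e : E) (x y : T) : bool :=
  ((ends e).1 == x) && ((ends e).2 == y) || ((ends e).1 == y) && ((ends e).2 == x).

Lemma joins_spans (S : {set T}) e x y :
  joins e x y -> x \in S -> y \in S -> spans ends S e.
Proof. by rewrite /spans; case/orP => /andP[/eqP -> /eqP ->] -> ->. Qed.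

Definition dense (S : {set T}) : bool := #|S| + 1 <= n_spanned ends S.

Lemma n_spanned_set0 : n_spanned ends set0 = 0.
Proof. by apply/eqP; rewrite cards_eq0; apply/eqP/setP => e; rewrite !inE /spans inE. Qed.

Lemma n_spanned_setT : n_spanned ends setT = #|E|.
Proof. by rewrite /n_spanned; apply: eq_card => e; rewrite !inE /spans !inE. Qed.

Definition touch (W B : {set T}) : nat :=
  #|[set e | spans ends W e && (((ends e).1 \in B) || ((ends e).2 \in B))]|.

Lemma n_spanned_split (W B : {set T}) :
  n_spanned ends W = n_spanned ends (W :\: B) + touch W B.
Proof.
rewrite /n_spanned /touch addnC.
set touching := [set e | ((ends e).1 \in B) || ((ends e).2 \in B)].
rewrite -(cardsID touching [set e | spans ends W e]).
congr (_ + _); apply: eq_card => e; rewrite !inE /spans ?inE.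
all: by case: ((ends e).1 \in B); case: ((ends e).2 \in B);
  case: ((ends e).1 \in W); case: ((ends e).2 \in W).
Qed.

(* Breadth-first balls inside W: ball W v r is the set of vertices reachable
   from v by a walk of length at most r whose vertices after v lie in W. *)
Definition step (W X : {set T}) : {set T} :=
  X :|: [set y in W | [exists e, [exists x in X, joins e x y]]].

Definition ball (W : {set T}) (v : T) (r : nat) : {set T} := iter r (step W) [set v].

Lemma ballS (W : {set T}) v r : ball W v r.+1 = step W (ball W v r).
Proof. by []. Qed.

Lemma ball_sub (W : {set T}) v r : v \in W -> ball W v r \subset W.
Proof.
move=> vW; elim: r => [|r IH]; first by rewrite sub1set.
by rewrite ballS subUset IH; apply/subsetP => y; rewrite inE => /andP[].
Qed.

Lemma ball_mono (W : {set T}) v m n : m <= n -> ball W v m \subset ball W v n.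
Proof.
move/subnKC <-; elim: (n - m) => [|d IH]; first by rewrite addn0.
by rewrite addnS ballS (subset_trans IH) ?subsetUl.
Qed.

Lemma ball_center (W : {set T}) v r : v \in ball W v r.
Proof. by apply: (subsetP (ball_mono W v (leq0n r))); rewrite set11. Qed.

Lemma touch_ball (W : {set T}) v r :
  touch W (ball W v r) <= n_spanned ends (ball W v r.+1).
Proof.
apply: subset_leq_card; apply/subsetP => e; rewrite !inE /spans ballS !inE.
case/andP=> /andP[xW yW] xyB; apply/andP; split; apply/orP.
- case/orP: xyB => inB; [by left | right]; rewrite xW /=.
  by apply/existsP; exists e; apply/existsP; exists (ends e).2;
    rewrite inB /joins !eqxx orbT.
- case/orP: xyB => inB; [right | by left]; rewrite yW /=.
  by apply/existsP; exists e; apply/existsP; exists (ends e).1;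
    rewrite inB /joins !eqxx.
Qed.

(* A parent map on B with root v, whose parent edges join each
   vertex to its parent and whose depth strictly decreases towards the root,
   yields #|S| - 1 distinct spanned tree edges inside every parent-closed
   S containing v; two further edges then make S dense. *)
Section RootedTree.
Variables (B : {set T}) (v : T) (R : nat).
Variables (parent : T -> T) (pedge : T -> E) (depth : T -> nat).
Hypothesis root_in : v \in B.
Hypothesis parent_root : parent v = v.
Hypothesis depth_bound : {in B, forall w, depth w <= R}.
Hypothesis parent_spec : {in B, forall w, w != v ->
  [/\ parent w \in B, depth (parent w) < depth w & joins (pedge w) (parent w) w]}.

Lemma iter_parent_in i w : w \in B -> iter i parent w \in B.
Proof.
move=> wB; elim: i => //= i IH.
have [->|wv] := eqVneq (iter i parent w) v; first by rewrite parent_root.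
by case: (parent_spec IH wv).
Qed.

Lemma iter_parent_root i w : w \in B -> depth w <= i -> iter i parent w = v.
Proof.
elim: i w => [|i IH] w wB dwi; have [->|wv] := eqVneq w v.
- by [].
- by case: (parent_spec wB wv) => _; rewrite ltnNge (leq_trans dwi).
- by elim: i.+1 {IH dwi} => //= n ->.
- case: (parent_spec wB wv) => pB dp _; rewrite iterSr; apply: IH => //.
  by rewrite -ltnS (leq_trans dp).
Qed.

Lemma pedge_inj : {in B :\ v &, injective pedge}.
Proof.
move=> w w' /setD1P[wv wB] /setD1P[w'v w'B] same.
have [_ dw jw] := parent_spec wB wv; have [_ dw' jw'] := parent_spec w'B w'v.
move: jw jw'; rewrite /joins same.
case/orP=> /andP[/eqP a1 /eqP a2]; case/orP=> /andP[/eqP b1 /eqP b2].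
- by rewrite -a2 b2.
- by move: dw dw'; rewrite -a1 b1 -a2 b2 => p /(ltn_trans p); rewrite ltnn.
- by move: dw dw'; rewrite -a2 b2 -a1 b1 => p /(ltn_trans p); rewrite ltnn.
- by rewrite -a1 b1.
Qed.

Definition tree_edges (S : {set T}) : {set E} := pedge @: (S :\ v).

Definition parent_closed (S : {set T}) : Prop :=
  [/\ S \subset B, v \in S & {in S, forall x, x != v -> parent x \in S}].

Lemma card_tree_edges S : parent_closed S -> #|tree_edges S| = #|S| - 1.
Proof.
case=> SB vS _; rewrite card_in_imset ?(cardsD1 v S) ?vS ?add1n ?subn1 //.
by apply: sub_in2 pedge_inj => x; rewrite !inE => /andP[-> /(subsetP SB) ->].
Qed.

Lemma tree_edges_spanned S e :
  parent_closed S -> e \in tree_edges S -> spans ends S e.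
Proof.
case=> SB _ Scl /imsetP[w /setD1P[wv wS] ->].
have [_ _ jw] := parent_spec (subsetP SB w wS) wv.
exact: joins_spans jw (Scl w wS wv) wS.
Qed.

Lemma parent_closed_dense S f1 f2 : parent_closed S -> f1 != f2 ->
  spans ends S f1 -> spans ends S f2 ->
  f1 \notin tree_edges B -> f2 \notin tree_edges B -> dense S.
Proof.
move=> Scl f12 f1S f2S f1B f2B.
have [SB vS _] := Scl.
have sub_tree : tree_edges S \subset tree_edges B by apply/imsetS/setSD.
have extra : [set f1; f2] \subset [set e | spans ends S e] :\: tree_edges S.
  apply/subsetP => e; rewrite !inE => /orP[] /eqP ->; rewrite ?f1S ?f2S andbT.
  - by apply: contra f1B; apply: (subsetP sub_tree).
  - by apply: contra f2B; apply: (subsetP sub_tree).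
have tree_sub : tree_edges S \subset [set e | spans ends S e].
  by apply/subsetP => e /(tree_edges_spanned Scl); rewrite inE.
have := subset_leq_card extra; rewrite cards2 f12 cardsD (setIidPr tree_sub).
rewrite card_tree_edges // /dense /n_spanned.
have : 0 < #|S| by rewrite card_gt0; apply/set0Pn; exists v.
lia.
Qed.

Definition ancestors (w : T) : {set T} := [set iter i parent w | i : 'I_R.+1].

Definition ancestor_set (X : seq T) : {set T} := \bigcup_(x <- X) ancestors x.

Lemma card_ancestor_set X : #|ancestor_set X| <= size X * R.+1.
Proof.
rewrite /ancestor_set; elim: X => [|x X IH]; first by rewrite big_nil cards0.
rewrite big_cons cardsU mulSn (leq_trans (leq_subr _ _)) // leq_add //.
by rewrite (leq_trans (leq_imset_card _ _)) ?card_ord.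
Qed.

Lemma ancestor_set_self X x : x \in X -> x \in ancestor_set X.
Proof.
rewrite /ancestor_set bigcup_seq => xX; apply/bigcupP; exists x => //.
by apply/imsetP; exists ord0.
Qed.

(* Ancestor sets are parent-closed: the root is an ancestor of everything,
   and the parent of an ancestor other than the root is again an ancestor. *)
Lemma ancestor_set_closed X :
  X != [::] -> {subset X <= B} -> parent_closed (ancestor_set X).
Proof.
rewrite /ancestor_set bigcup_seq => Xn XB; split.
- apply/bigcupsP => x /XB xB; apply/subsetP => _ /imsetP[i _ ->].
  exact: iter_parent_in.
- case: X Xn XB => // x X _ XB; apply/bigcupP; exists x; first exact: mem_head.
  apply/imsetP; exists ord_max => //=.
  by rewrite iter_parent_root ?depth_bound ?XB ?mem_head.
- move=> _ /bigcupP[x xX /imsetP[i _ ->]] iv; apply/bigcupP; exists x => //.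
  have [lt_iR|le_Ri] := ltnP i R.
    by apply/imsetP; exists (Ordinal (lt_iR : i.+1 < R.+1)); rewrite //= iterS.
  have xB := XB x xX.
  by rewrite (iter_parent_root xB (leq_trans (depth_bound xB) le_Ri)) eqxx in iv.
Qed.

(* A dense B contains a dense set of at most 4(R+1) vertices: the ancestors
   of the endpoints of two spanned edges that are not tree edges. *)
Lemma dense_tree_witness :
  dense B -> exists S : {set T}, #|S| <= 4 * R.+1 /\ dense S.
Proof.
move=> denseB.
have Bcl : parent_closed B by split=> // x xB /(parent_spec xB) [].
have tree_sub : tree_edges B \subset [set e | spans ends B e].
  by apply/subsetP => e /(tree_edges_spanned Bcl); rewrite inE.
have : 1 < #|[set e | spans ends B e] :\: tree_edges B|.
  rewrite cardsD (setIidPr tree_sub) card_tree_edges //.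
  have : 0 < #|B| by rewrite card_gt0; apply/set0Pn; exists v.
  by move: denseB; rewrite /dense /n_spanned; lia.
case/card_gt1P => f1 [f2 []]; rewrite !inE => /andP[f1B f1sp] /andP[f2B f2sp] f12.
set X := [:: (ends f1).1; (ends f1).2; (ends f2).1; (ends f2).2].
have XB : {subset X <= B}.
  move: f1sp f2sp; rewrite /spans => /andP[? ?] /andP[? ?] x.
  by rewrite !inE => /or4P[] /eqP ->.
exists (ancestor_set X); split; first exact: card_ancestor_set.
have Scl : parent_closed (ancestor_set X) by apply: ancestor_set_closed.
apply: parent_closed_dense Scl f12 _ _ f1B f2B.
all: by rewrite /spans !ancestor_set_self // !inE eqxx ?orbT.
Qed.

End RootedTree.

(* Breadth-first search from v inside W, up to radius R, produces a rooted
   tree on ball W v R (e0 is a dummy edge used off the tree). *)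
Section BFSTree.
Variables (W : {set T}) (v : T) (R : nat) (e0 : E).

Let B := ball W v R.

Lemma level_exists w : exists n, (w \in ball W v n) || (n == R).
Proof. by exists R; rewrite eqxx orbT. Qed.

(* The BFS level of w: the least radius of a ball containing w (R if none). *)
Definition bfs_depth (w : T) : nat := ex_minn (level_exists w).

Lemma bfs_depth_min w n : w \in ball W v n -> bfs_depth w <= n.
Proof.
by rewrite /bfs_depth; case: ex_minnP => m _ min_m wn; apply: min_m; rewrite wn.
Qed.

Lemma bfs_depth_le w : bfs_depth w <= R.
Proof. by rewrite /bfs_depth; case: ex_minnP => m _; apply; rewrite eqxx orbT. Qed.

Lemma bfs_depth_ball w : w \in B -> w \in ball W v (bfs_depth w).
Proof. by move=> wB; rewrite /bfs_depth; case: ex_minnP => m /orP[|/eqP ->]. Qed.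

Definition bfs_link (w : T) : option (T * E) :=
  [pick xe : T * E | (xe.1 \in ball W v (bfs_depth w).-1) && joins xe.2 xe.1 w].

Definition bfs_parent (w : T) : T := if bfs_link w is Some xe then xe.1 else v.

Definition bfs_pedge (w : T) : E := if bfs_link w is Some xe then xe.2 else e0.

Lemma bfs_parent_root : bfs_parent v = v.
Proof.
have dv : bfs_depth v = 0 by apply/eqP; rewrite -leqn0 bfs_depth_min ?set11.
rewrite /bfs_parent /bfs_link dv; case: pickP => [[x e] /andP[/= + _]|//].
by rewrite inE => /eqP.
Qed.

Lemma bfs_parent_spec : {in B, forall w, w != v ->
  [/\ bfs_parent w \in B, bfs_depth (bfs_parent w) < bfs_depth w
    & joins (bfs_pedge w) (bfs_parent w) w]}.
Proof.
move=> w wB wv; have := bfs_depth_ball wB; have := bfs_depth_le w.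
case Edw: (bfs_depth w) => [|n] dR wdw.
  by move: wdw wv; rewrite inE => ->.
have wn : w \notin ball W v n by apply/negP => /bfs_depth_min; rewrite Edw ltnn.
move: wdw; rewrite ballS inE (negbTE wn) inE.
case/andP=> _ /existsP[e /existsP[x /andP[xn jx]]].
rewrite /bfs_parent /bfs_pedge /bfs_link Edw /=.
case: pickP => [[x' e'] /= /andP[x'n jx']|/(_ (x, e))]; last by rewrite /= xn jx.
split=> //; last by rewrite ltnS bfs_depth_min.
exact: subsetP (ball_mono W v (ltnW dR)) _ x'n.
Qed.

End BFSTree.

Lemma dense_ball_witness (W : {set T}) v R :
  dense (ball W v R) -> exists S : {set T}, #|S| <= 4 * R.+1 /\ dense S.
Proof.
move=> dB; have : 0 < n_spanned ends (ball W v R) by move: dB; rewrite /dense; lia.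
rewrite /n_spanned card_gt0 => /set0Pn[e0 _].
apply: (dense_tree_witness (ball_center W v R) (bfs_parent_root W v R)
  (fun w _ => bfs_depth_le W v R w) (@bfs_parent_spec W v R e0) dB).
Qed.

Definition expanding (k : nat) (W : {set T}) : bool :=
  [forall B : {set T}, (B \subset W) ==> ((k + 1) * #|B| <= k * touch W B)].

Lemma ball_growth (W : {set T}) v k n : v \in W -> expanding k W ->
  (forall r, r < n -> ~~ dense (ball W v r.+1)) ->
  (k + 1) ^ n <= k ^ n * #|ball W v n|.
Proof.
move=> vW /forallP expW; elim: n => [|n IH] sparse; first by rewrite cards1.
have grow : (k + 1) * #|ball W v n| <= k * #|ball W v n.+1|.
  apply: leq_trans (implyP (expW _) (ball_sub n vW)) _; rewrite leq_mul2l.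
  apply/orP; right; apply: leq_trans (touch_ball W v n) _.
  by have := sparse n (ltnSn n); rewrite /dense -ltnNge addn1 ltnS.
have IHn := IH (fun r lt_r => sparse r (ltnW lt_r)).
rewrite !expnS; apply: leq_trans (leq_mul (leqnn (k + 1)) IHn) _.
by rewrite mulnCA (mulnC k) -mulnA leq_mul2l grow orbT.
Qed.

(* Expansion cannot go on for k j steps inside fewer than 2^j vertices, so
   one of the first k j balls is dense. *)
Lemma expanding_dense_ball (W : {set T}) v k j : v \in W -> 0 < k ->
  #|W| < 2 ^ j -> expanding k W -> exists2 r, r < k * j & dense (ball W v r.+1).
Proof.
move=> vW k_gt0 Wj expW.
have [/existsP[r dr]|/existsPn sparse] :=
  boolP [exists r : 'I_(k * j), dense (ball W v r.+1)]; first by exists r.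
have := ball_growth vW expW (fun r lt_r => sparse (Ordinal lt_r)).
move/(leq_trans (pow_doubling j k_gt0)).
rewrite mulnC leq_pmul2l ?expn_gt0 ?k_gt0 //.
move/leq_trans/(_ (subset_leq_card (ball_sub (k * j) vW))).
by rewrite leqNgt Wj.
Qed.

Section SparseSmallSets.
Variables (k j : nat).
Hypothesis k_gt0 : 0 < k.
Hypothesis T_small : #|T| < 2 ^ j.
Hypothesis small_sparse : forall S : {set T}, #|S| <= 4 * (k * j).+1 -> ~~ dense S.

Lemma not_expanding (W : {set T}) : W != set0 -> ~~ expanding k W.
Proof.
case/set0Pn => v vW; apply/negP => expW.
have Wj : #|W| < 2 ^ j by apply: leq_ltn_trans (max_card _) T_small.
have [r lt_r dr] := expanding_dense_ball vW k_gt0 Wj expW.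
have [S [cardS dS]] := dense_ball_witness dr.
apply/negP: dS; apply: small_sparse; apply: leq_trans cardS _.
by rewrite leq_mul2l ltnS.
Qed.

(* Induction on #|W|: split off a non-expanding piece B and use the bound
   for W minus B. *)
Lemma sparse_everywhere (W : {set T}) :
  W != set0 -> k * n_spanned ends W < (k + 1) * #|W|.
Proof.
move: {2}#|W| (leqnn #|W|) => m; elim: m W => [|m IH] W Wm Wn.
  by move: Wm; rewrite leqn0 cards_eq0 (negbTE Wn).
have /forallPn[B] := not_expanding Wn.
rewrite negb_imply -ltnNge => /andP[BW touchB].
have B_gt0 : 0 < #|B| by case: #|B| touchB => //; rewrite muln0.
have cardW : #|W| = #|W :\: B| + #|B|.
  by rewrite -(cardsID B W) (setIidPr BW) addnC.
rewrite (n_spanned_split W B) cardW.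
have [->|Dn] := eqVneq (W :\: B) set0; first by rewrite n_spanned_set0 cards0; lia.
have := IH _ _ Dn; rewrite cardW in Wm; lia.
Qed.

End SparseSmallSets.

(* The combinatorial core of the theorem, with k standing for ceil(1/eps)
   and p for floor(log2 #|T|). *)
Lemma dense_set_exists k p : 0 < k -> 0 < p -> 0 < #|T| -> #|T| < 2 ^ p.+1 ->
  (k + 1) * #|T| <= k * #|E| -> exists S : {set T}, #|S| <= 8 * p * k /\ dense S.
Proof.
move=> k_gt0 p_gt0 T_gt0 T_lt edges.
case: p p_gt0 T_lt => [|[|p]] // _ T_lt.
  (* For p = 1 there are at most 3 <= 8k vertices: take them all. *)
  exists setT; rewrite /dense n_spanned_setT cardsT; split; first by move: T_lt; lia.
  by move: edges; nia.
have [/existsP[S /andP[cardS dS]]|/existsPn sparse] :=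
  boolP [exists S : {set T}, (#|S| <= 4 * (k * p.+3).+1) && dense S].
  by exists S; split=> //; apply: leq_trans cardS _; nia.
have small_sparse (S : {set T}) : #|S| <= 4 * (k * p.+3).+1 -> ~~ dense S.
  by move=> cardS; have := sparse S; rewrite cardS.
have T_ne0 : [set: T] != set0 by rewrite -card_gt0 cardsT.
have := sparse_everywhere k_gt0 T_lt small_sparse T_ne0.
by rewrite n_spanned_setT cardsT ltnNge edges.
Qed.
End Multigraph.

Lemma INR_expn (m n : nat) : INR (m ^ n) = (INR m ^ n)%R.
Proof. by elim: n => [|n IH] //; rewrite expnS -multE mult_INR IH. Qed.

Lemma ln_le_mono (x y : R) : (0 < x)%R -> (x <= y)%R -> (ln x <= ln y)%R.
Proof.
move=> x_gt0 /Rle_lt_or_eq_dec [lt_xy|->]; last exact: Rle_refl.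
exact: Rlt_le (ln_increasing _ _ x_gt0 lt_xy).
Qed.

Lemma log2_ge (p x : nat) : 2 ^ p <= x -> (INR p <= log2 (INR x))%R.
Proof.
move=> /leP/le_INR; rewrite INR_expn => le_x.
have ln2_gt0 : (0 < ln 2)%R by rewrite -ln_1; apply: ln_increasing; lra.
have := ln_le_mono (pow_lt 2 p ltac:(lra)) le_x; rewrite ln_pow; last lra.
move=> le_ln; rewrite /log2; apply: (Rmult_le_reg_r (ln 2)) => //.
by rewrite /Rdiv Rmult_assoc Rinv_l; lra.
Qed.

Lemma ceil_inv (eps : R) : (0 < eps)%R ->
  exists k : nat, [/\ 0 < k, IZR (ceilR (1 / eps)) = INR k & (1 <= INR k * eps)%R].
Proof.
move=> eps_gt0.
have ceil_ge : (1 / eps <= IZR (ceilR (1 / eps)))%R.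
  by rewrite /ceilR opp_IZR; have [lb _] := base_Int_part (- (1 / eps)); lra.
have inv_gt0 : (0 < 1 / eps)%R by apply: Rdiv_lt_0_compat; lra.
have ceil_gt0 : (0 < ceilR (1 / eps))%Z by apply: lt_0_IZR; lra.
exists (Z.to_nat (ceilR (1 / eps))).
rewrite INR_IZR_INZ Znat.Z2Nat.id; last lia.
split=> //; first lia.
have inv_eps : (1 / eps * eps = 1)%R by field; lra.
have := Rmult_le_compat_r eps _ _ (Rlt_le _ _ eps_gt0) ceil_ge; lra.
Qed.

Lemma scaled_edge_bound (s m k : nat) (eps : R) :
  (INR s * (1 + eps) <= INR m)%R -> (1 <= INR k * eps)%R -> (k + 1) * s <= k * m.
Proof.
move=> le_m ge_k; apply/leP/INR_le; rewrite -!multE !mult_INR -plusE plus_INR /=.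
have := pos_INR s; have := pos_INR k; nra.
Qed.

Theorem lemma3p1 (T E : finType) (ends : E -> T * T) (eps : R) :
  (0 < eps)%R ->
  2 <= #|T| ->
  (INR #|T| * (1 + eps) <= INR #|E|)%R ->
  exists S : {set T},
    (INR #|S| <= 8 * log2 (INR #|T|) * IZR (ceilR (1 / eps)))%R /\
    #|S| + 1 <= n_spanned ends S.
Proof.
move=> eps_gt0 T_ge2 edges.
have [k [k_gt0 -> k_eps]] := ceil_inv eps_gt0.
have T_gt0 : 0 < #|T| by apply: leq_trans T_ge2.
set p := trunc_log 2 #|T|.
have p_gt0 : 0 < p by apply: trunc_log_max; rewrite ?expn1.
have [S [cardS denseS]] := dense_set_exists ends k_gt0 p_gt0 T_gt0
  (trunc_log_ltn _ (isT : 1 < 2)) (scaled_edge_bound edges k_eps).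
exists S; split=> //.
have p_log : (INR p <= log2 (INR #|T|))%R.
  exact: log2_ge (trunc_logP (isT : 1 < 2) T_gt0).
have := le_INR _ _ (elimT leP cardS); rewrite -!multE !mult_INR.
rewrite (_ : INR 8 = 8%R); last by simpl; lra.
by have := pos_INR k; nra.
Qed.
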